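(* For every $-1\le j\le d-2$ and every $j$-cell $\rho$ of $T_{d,k}$ (for $j=-1$, $\rho=\emptyset$), the link $\mathrm{lk}_{T_{d,k}}(\rho)=\{\sigma\in T_{d,k}:\sigma\cap\rho=\emptyset,\ \sigma\cup\rho\in T_{d,k}\}$ is isomorphic, as a simplicial complex, to $T_{d-|\rho|,k}$.
   Context: For $d,k\ge1$, the $k$-regular $d$-dimensional arboreal complex $T_{d,k}$ is the simplicial complex obtained by starting from a single $d$-simplex $\mathcal T$, attaching to each of its $(d-1)$-faces $k-1$ new $d$-simplices each using a new vertex, and inductively attaching to each $(d-1)$-face created in the previous step $k-1$ new $d$-simplices each using a new vertex; $T_{d,k}$ is the union over all steps. *)

From mathcomp Require Import all_boot.
Set Implicit Arguments. Unset Strict Implicit. Unset Printing Implicit Defensive.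

(* ---------- Abstract simplicial complexes ----------
   A (possibly infinite) simplicial complex on a vertex type V is given by the
   predicate of its cells; a cell is written as a duplicate-free list of
   vertices (the order is irrelevant: all complexes below are closed under
   permutation). *)

Definition link (V : eqType) (K : seq V -> Prop) (r : seq V) : seq V -> Prop :=
  fun s => (forall x, x \in s -> x \notin r) /\ K (s ++ r).

Definition sc_iso (V W : eqType) (K : seq V -> Prop) (L : seq W -> Prop) : Prop :=
  exists (f : V -> W) (g : W -> V),
    [/\ (forall x, K [:: x] -> L [:: f x] /\ g (f x) = x),
        (forall y, L [:: y] -> K [:: g y] /\ f (g y) = y),
        (forall s, K s -> L (map f s)) &
        (forall t, L t -> K (map g t))].

(* A d-simplex of T_{d,k} is encoded by the sequence of
   attachment moves leading to it from the initial simplex: the initial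
   simplex has vertices at "positions" 0..d; a move (i, c) (i <= d,
   c < k-1 the index of the copy among the k-1 new simplices) replaces the
   vertex at position i by a new vertex, i.e. attaches a new simplex along
   the (d-1)-face opposite to position i.  Faces created in the previous step
   are exactly those containing the newest vertex, so consecutive moves must
   use different positions. *)

Definition move := (nat * nat)%type.

Definition valid_path (d k : nat) (p : seq move) : bool :=
  all (fun m => (m.1 <= d) && (m.2 < k.-1)) p && sorted (fun a b => a.1 != b.1) p.

(* vertices: (i, [::]) is the i-th vertex of the initial simplex; (i, q) with
   q nonempty is the new vertex created by the last move of q (at position i) *)
Definition vertex := (nat * seq move)%type.

Definition vert (p : seq move) (i : nat) : vertex :=
  let n := size p - find (fun m : move => m.1 == i) (rev p) in
  (i, take n p).

Definition facet_verts (d : nat) (p : seq move) : seq vertex :=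
  [seq vert p i | i <- iota 0 d.+1].

Definition T (d k : nat) : seq vertex -> Prop :=
  fun s => uniq s /\ exists p, valid_path d k p /\ {subset s <= facet_verts d p}.

From mathcomp Require Import all_boot zify.
Set Implicit Arguments. Unset Strict Implicit. Unset Printing Implicit Defensive.

(** Let [q] be the longest history of a vertex of [rho].  Every facet
    containing [rho] is encoded by a path [q ++ r] whose tail [r] only moves
    the [d + 1 - size rho] positions not occupied by [rho], and conversely
    every such path is a facet containing [rho]: the last move of [q] is at a
    position of [rho], so it differs from the first move of [r].  Renumbering
    the free positions increasingly as [0 .. d - size rho] turns these tails
    into the facets of [T (d - size rho) k], and sending a vertex to its
    renumbered position and the renumbered part of its history after [q] is
    the required isomorphism. *)

Notation at_pos i := (fun m : move => m.1 == i).

Lemma vert_fst p i : (vert p i).1 = i. Proof. by []. Qed.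

Lemma vertE p i : vert p i = (i, (vert p i).2). Proof. by []. Qed.

Lemma find_rev_at_pos_le p i : find (at_pos i) (rev p) <= size p.
Proof. by rewrite -(size_rev p) find_size. Qed.

Lemma find_rev_at_pos_lt p i : has (at_pos i) p -> find (at_pos i) (rev p) < size p.
Proof. by rewrite -(size_rev p) -has_find has_rev. Qed.

Lemma vert_take p i : (vert p i).2 = take (size (vert p i).2) p.
Proof. by rewrite /= size_takel ?leq_subr. Qed.

Lemma vert_nil p i : ~~ has (at_pos i) p -> (vert p i).2 = [::].
Proof.
rewrite /vert /= -has_rev has_find -leqNgt size_rev => hp.
have := find_rev_at_pos_le p i.
have -> : size p - find (at_pos i) (rev p) = 0 by lia.
by rewrite take0.
Qed.

Lemma vert_nilN p i : has (at_pos i) p -> (vert p i).2 != [::].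
Proof.
move=> /find_rev_at_pos_lt hp; rewrite -size_eq0 /= size_takel ?leq_subr //; lia.
Qed.

Lemma vert_cat a b i : (vert (a ++ b) i).2 =
  if has (at_pos i) b then a ++ (vert b i).2 else (vert a i).2.
Proof.
rewrite /vert /= rev_cat find_cat has_rev size_cat.
case: ifP => hb.
  have hlt := find_rev_at_pos_lt hb.
  rewrite take_cat ifN; last by lia.
  congr (_ ++ take _ _); lia.
have hle := find_rev_at_pos_le a i.
rewrite size_rev takel_cat; last by lia.
congr (take _ _); lia.
Qed.

Lemma vert_suffix p i : all (fun m : move => m.1 != i) (drop (size (vert p i).2) p).
Proof.
rewrite /= size_takel ?leq_subr //.
rewrite -[drop _ p]revK -take_rev all_rev.
by elim: (rev p) => //= x s IH; case: ifP => //= ->.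
Qed.

Lemma vert_last p i x0 : has (at_pos i) p -> (last x0 (vert p i).2).1 = i.
Proof.
move=> hp; have hlt := find_rev_at_pos_lt hp.
rewrite /= -nth_last size_takel ?leq_subr // nth_take; last by lia.
have /eqP := @nth_find _ x0 (at_pos i) (rev p) ltac:(by rewrite has_rev).
rewrite nth_rev ?size_rev // => hn.
apply: etrans hn; congr (nth _ _ _).1; lia.
Qed.

Definition relab (h : nat -> nat) (p : seq move) : seq move :=
  map (fun m => (h m.1, m.2)) p.

Lemma relab_comp h h' p : relab h (relab h' p) = relab (h \o h') p.
Proof. by rewrite /relab -map_comp. Qed.

Lemma vert_relab (h : nat -> nat) p i :
  {in p, forall m : move, (h m.1 == h i) = (m.1 == i)} ->
  vert (relab h p) (h i) = (h i, relab h (vert p i).2).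
Proof.
move=> hh; rewrite /vert /relab -map_rev find_map size_map /=.
rewrite (@eq_in_find _ _ (at_pos i)); first by rewrite map_take.
by move=> m; rewrite mem_rev => /hh.
Qed.

Lemma facet_vertsP d p x : x \in facet_verts d p -> x = vert p x.1 /\ x.1 <= d.
Proof. by case/mapP=> i; rewrite mem_iota add0n ltnS => hi ->. Qed.

Lemma mem_facet_verts d p i : i <= d -> vert p i \in facet_verts d p.
Proof. by move=> hi; apply: map_f; rewrite mem_iota add0n ltnS. Qed.

Lemma facet_uniq_fst d p s : uniq s -> {subset s <= facet_verts d p} -> uniq (map fst s).
Proof.
move=> us hs; rewrite map_inj_in_uniq // => x y /hs/facet_vertsP[hx _].
by move=> /hs/facet_vertsP[hy _] e; rewrite hx hy e.
Qed.

Definition top_hist (rho : seq vertex) : seq move :=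
  foldr (fun x acc => if size acc < size x.2 then x.2 else acc) [::] rho.

Lemma size_top_hist rho x : x \in rho -> size x.2 <= size (top_hist rho).
Proof.
elim: rho => //= y rho IH; rewrite -/(top_hist rho) inE => /orP[/eqP ->|/IH h];
  case: ltnP => //; lia.
Qed.

Lemma top_histP rho : top_hist rho = [::] \/ exists2 x, x \in rho & top_hist rho = x.2.
Proof.
elim: rho => [|y rho IH] /=; first by left.
case: ifP => _; first by right; exists y; rewrite ?inE ?eqxx.
case: IH => [->|[x hx ->]]; first by left.
by right; exists x; rewrite // inE hx orbT.
Qed.

Section TopHistory.
Variables (d : nat) (p : seq move) (rho : seq vertex).
Hypothesis rho_sub : {subset rho <= facet_verts d p}.

Lemma top_hist_prefix : p = top_hist rho ++ drop (size (top_hist rho)) p.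
Proof.
case: (top_histP rho) => [->|[x hx ->]]; first by rewrite drop0.
have [e _] := facet_vertsP (rho_sub hx).
have e2 : x.2 = take (size x.2) p by have := vert_take p x.1; rewrite -e.
by rewrite {1}e2 cat_take_drop.
Qed.

Lemma top_hist_suffix_avoid x : x \in rho ->
  all (fun m : move => m.1 != x.1) (drop (size (top_hist rho)) p).
Proof.
move=> hx; have [e _] := facet_vertsP (rho_sub hx).
have h := vert_suffix p x.1; rewrite -e in h.
apply/allP=> m hm; apply: (allP h).
move: hm; rewrite -(subnK (size_top_hist hx)) -drop_drop; exact: mem_drop.
Qed.

End TopHistory.

Section FreePositions.
Variables (d : nat) (rho : seq vertex).

Definition free_pos : seq nat := [seq i <- iota 0 d.+1 | i \notin map fst rho].
Definition rank_free i := index i free_pos.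
Definition nth_free j := nth 0 free_pos j.

Lemma free_pos_uniq : uniq free_pos.
Proof. by rewrite filter_uniq // iota_uniq. Qed.

Lemma mem_free_pos i : (i \in free_pos) = (i <= d) && (i \notin map fst rho).
Proof. by rewrite mem_filter mem_iota add0n ltnS andbC. Qed.

Lemma size_free_pos : uniq (map fst rho) -> all (fun i => i <= d) (map fst rho) ->
  size free_pos = d.+1 - size rho.
Proof.
move=> us hs.
have hp : perm_eq [seq i <- iota 0 d.+1 | i \in map fst rho] (map fst rho).
  apply: uniq_perm; rewrite ?filter_uniq ?iota_uniq // => i.
  rewrite mem_filter mem_iota add0n ltnS.
  by case: (boolP (i \in _)) => //= hi; rewrite (allP hs).
have := count_predC (mem (map fst rho)) (iota 0 d.+1).
rewrite size_iota -!size_filter (perm_size hp) size_map => e.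
change (size rho + size free_pos = d.+1) in e; lia.
Qed.

Lemma rank_free_lt i : i \in free_pos -> rank_free i < size free_pos.
Proof. by rewrite /rank_free index_mem. Qed.

Lemma mem_nth_free j : j < size free_pos -> nth_free j \in free_pos.
Proof. exact: mem_nth. Qed.

Lemma rank_freeK : {in free_pos, cancel rank_free nth_free}.
Proof. by move=> i hi; rewrite /rank_free /nth_free nth_index. Qed.

Lemma nth_freeK j : j < size free_pos -> rank_free (nth_free j) = j.
Proof. by move=> h; rewrite /rank_free /nth_free index_uniq // free_pos_uniq. Qed.

Lemma eq_rank_free a b : a \in free_pos -> b \in free_pos ->
  (rank_free a == rank_free b) = (a == b).
Proof.
move=> ha hb; apply/eqP/eqP => [e|->] //.
by rewrite -(rank_freeK ha) -(rank_freeK hb) e.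
Qed.

Lemma eq_nth_free a b : a < size free_pos -> b < size free_pos ->
  (nth_free a == nth_free b) = (a == b).
Proof.
move=> ha hb; apply/eqP/eqP => [e|->] //.
by rewrite -(nth_freeK ha) -(nth_freeK hb) e.
Qed.

Lemma relab_rank_freeK r : all (fun m : move => m.1 \in free_pos) r ->
  relab nth_free (relab rank_free r) = r.
Proof.
move=> hr; rewrite relab_comp; apply: map_id_in => m hm /=.
by rewrite rank_freeK ?(allP hr) //; case: m hm.
Qed.

Lemma relab_nth_freeK r : all (fun m : move => m.1 < size free_pos) r ->
  relab rank_free (relab nth_free r) = r.
Proof.
move=> hr; rewrite relab_comp; apply: map_id_in => m hm /=.
by rewrite nth_freeK ?(allP hr) //; case: m hm.
Qed.

Definition reduce_vert (x : vertex) : vertex :=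
  (rank_free x.1, relab rank_free (drop (size (top_hist rho)) x.2)).

(** A vertex of the initial simplex of [T (d - size rho) k] corresponds to a
    vertex of the facet [top_hist rho], not of the initial simplex. *)
Definition lift_vert (y : vertex) : vertex :=
  if y.2 is [::] then vert (top_hist rho) (nth_free y.1)
  else (nth_free y.1, top_hist rho ++ relab nth_free y.2).

Lemma reduce_vert_vert r i : i \in free_pos ->
  all (fun m : move => m.1 \in free_pos) r ->
  reduce_vert (vert (top_hist rho ++ r) i) = vert (relab rank_free r) (rank_free i).
Proof.
move=> hi hr.
rewrite vert_relab; last by move=> m hm; rewrite eq_rank_free // (allP hr).
rewrite /reduce_vert vert_fst; congr (_, _); rewrite vert_cat.
case: ifP => hb; first by rewrite drop_size_cat.
rewrite [(vert r i).2]vert_nil ?hb // drop_oversize //.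
by rewrite [X in size X <= _]vert_take size_take; case: ltnP => // /ltnW.
Qed.

Lemma lift_vert_vert t j : j < size free_pos ->
  all (fun m : move => m.1 < size free_pos) t ->
  lift_vert (vert t j) = vert (top_hist rho ++ relab nth_free t) (nth_free j).
Proof.
move=> hj ht.
have hh : has (at_pos (nth_free j)) (relab nth_free t) = has (at_pos j) t.
  by rewrite has_map; apply: eq_in_has => m hm /=; rewrite eq_nth_free // (allP ht).
rewrite [RHS]vertE vert_cat hh /lift_vert vert_fst.
case: ifP => hb; last by rewrite [(vert t j).2]vert_nil ?hb.
rewrite vert_relab; last by move=> m hm; rewrite eq_nth_free // (allP ht).
by have := vert_nilN hb; case: (vert t j).2.
Qed.

End FreePositions.

Lemma link_facet_split d k rho p s : valid_path d k p ->
  {subset s ++ rho <= facet_verts d p} -> (forall x, x \in s -> x \notin rho) ->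
 [/\ p = top_hist rho ++ drop (size (top_hist rho)) p,
     all (fun m : move => m.1 \in free_pos d rho) (drop (size (top_hist rho)) p)
   & forall x, x \in s -> x.1 \in free_pos d rho /\ x = vert p x.1].
Proof.
move=> /andP[hv _] hs hd.
have hr : {subset rho <= facet_verts d p}.
  by move=> x hx; apply: hs; rewrite mem_cat hx orbT.
split; first exact: top_hist_prefix hr.
  apply/allP => m hm; rewrite mem_free_pos.
  have /andP[-> _] /= := allP hv m (mem_drop hm).
  apply/mapP => -[x hx e].
  by have := allP (top_hist_suffix_avoid hr hx) m hm; rewrite e eqxx.
move=> x hx; have [e hxd] := facet_vertsP (hs x ltac:(by rewrite mem_cat hx)).
split => //; rewrite mem_free_pos hxd /=.
apply/mapP => -[y hy ey]; have [ey' _] := facet_vertsP (hr y hy).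
have exy : x = y by rewrite e ey -ey'.
by have := hd x hx; rewrite exy hy.
Qed.

Section ExtendTopHistory.
Variables (d k : nat) (rho : seq vertex) (p0 r : seq move).
Hypotheses (p0_valid : valid_path d k p0) (rho_sub : {subset rho <= facet_verts d p0}).
Hypothesis r_free : all (fun m : move => m.1 \in free_pos d rho) r.
Hypothesis r_copies : all (fun m : move => m.2 < k.-1) r.
Hypothesis r_sorted : sorted (fun a b : move => a.1 != b.1) r.

Lemma tail_pos_notin m : m \in r -> m.1 \notin map fst rho.
Proof. by move=> /(allP r_free); rewrite mem_free_pos => /andP[]. Qed.

Lemma top_hist_cat_valid : valid_path d k (top_hist rho ++ r).
Proof.
have hq := top_hist_prefix rho_sub.
move: p0_valid => /andP[hv0a hv0s].
rewrite /valid_path all_cat; apply/andP; split.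
  apply/andP; split.
    by apply/allP => m hm; apply: (allP hv0a); rewrite hq mem_cat hm.
  apply/allP => m hm; rewrite (allP r_copies) // andbT.
  by have := allP r_free m hm; rewrite mem_free_pos => /andP[].
case: (top_histP rho) => [->|[x hx eq]] //.
move: hv0s; rewrite hq eq.
case e2 : x.2 => [|a q'] //=.
rewrite !cat_path => /andP[-> _] /=.
case: r r_sorted tail_pos_notin => [|b r'] //= -> hra; rewrite andbT.
have [ex _] := facet_vertsP (rho_sub hx).
have hh : has (at_pos x.1) p0.
  by apply/negPn/negP => /vert_nil h; rewrite -ex e2 in h.
have := vert_last a hh; rewrite -ex e2 /= => ->.
by apply/eqP => eb; have := hra b (mem_head _ _); rewrite -eb map_f.
Qed.

Lemma top_hist_cat_sub : {subset rho <= facet_verts d (top_hist rho ++ r)}.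
Proof.
move=> y hy; have [e hyd] := facet_vertsP (rho_sub hy).
have h1 : ~~ has (at_pos y.1) (drop (size (top_hist rho)) p0).
  by rewrite -all_predC; exact: (top_hist_suffix_avoid rho_sub hy).
have h2 : ~~ has (at_pos y.1) r.
  rewrite -all_predC; apply/allP => m hm /=; apply/eqP => em.
  by have := tail_pos_notin hm; rewrite em map_f.
have E : vert p0 y.1 = vert (top_hist rho ++ r) y.1.
  by rewrite vertE [RHS]vertE {1}(top_hist_prefix rho_sub) !vert_cat (negbTE h1) (negbTE h2).
by rewrite e E mem_facet_verts.
Qed.

End ExtendTopHistory.

Section Link.
Variables (d k : nat) (rho : seq vertex).
Hypotheses (rho_cell : T d k rho) (rho_small : size rho <= d).

Lemma size_free_pos_cell : size (free_pos d rho) = (d - size rho).+1.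
Proof.
have [urho [p0 [_ hs0]]] := rho_cell.
have aS : all (fun i => i <= d) (map fst rho).
  by apply/allP => i /mapP[x hx ->]; have [_ ->] := facet_vertsP (hs0 x hx).
rewrite size_free_pos ?(facet_uniq_fst urho hs0) //; lia.
Qed.

Lemma reduce_link_cell s : link (T d k) rho s ->
  T (d - size rho) k (map (reduce_vert d rho) s) /\
  {in s, cancel (reduce_vert d rho) (lift_vert d rho)}.
Proof.
move=> [s_disj [s_uniq [p [p_valid s_sub]]]].
have [p_split tail_free s_verts] := link_facet_split p_valid s_sub s_disj.
have /andP[p_moves p_sorted] := p_valid.
move: p_split tail_free; set r := drop _ p => p_split tail_free.
have reduce_vertE x : x \in s ->
    reduce_vert d rho x = vert (relab (rank_free d rho) r) (rank_free d rho x.1).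
  by move=> /s_verts[hx ->]; rewrite {1}p_split reduce_vert_vert.
have reduce_r_lt :
    all (fun m : move => m.1 < size (free_pos d rho)) (relab (rank_free d rho) r).
  by rewrite all_map; apply/allP => m /(allP tail_free)/rank_free_lt.
have reduce_vertK : {in s, cancel (reduce_vert d rho) (lift_vert d rho)}.
  move=> x hx; have [hxP ex] := s_verts x hx.
  rewrite reduce_vertE // lift_vert_vert ?rank_free_lt //.
  by rewrite relab_rank_freeK // rank_freeK // -p_split -ex.
split=> //; split.
  rewrite map_inj_in_uniq; last exact: can_in_inj reduce_vertK.
  by move: s_uniq; rewrite cat_uniq => /and3P[].
exists (relab (rank_free d rho) r); split.
  apply/andP; split.
    rewrite all_map; apply/allP => m hm /=.
    have /andP[_ ->] := allP p_moves m (mem_drop hm).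
    by have := rank_free_lt (allP tail_free m hm); rewrite size_free_pos_cell ltnS => ->.
  rewrite sorted_map; move: p_sorted; rewrite p_split => /cat_sorted2[_].
  apply: (sub_in_sorted (P := fun m : move => m.1 \in free_pos d rho)) => //.
  by move=> a b ha hb /=; rewrite eq_rank_free.
move=> y /mapP[x hx ->]; rewrite reduce_vertE //.
apply: mem_facet_verts; rewrite -ltnS -size_free_pos_cell rank_free_lt //.
by have [] := s_verts x hx.
Qed.

Lemma lift_T_cell t : T (d - size rho) k t ->
  link (T d k) rho (map (lift_vert d rho) t) /\
  {in t, cancel (lift_vert d rho) (reduce_vert d rho)}.
Proof.
have [rho_uniq [p0 [p0_valid rho_sub]]] := rho_cell.
move=> [t_uniq [p [/andP[p_moves p_sorted] t_sub]]].
set r := relab (nth_free d rho) p.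
have p_lt : all (fun m : move => m.1 < size (free_pos d rho)) p.
  by apply/allP => m /(allP p_moves)/andP[]; rewrite size_free_pos_cell ltnS.
have r_free : all (fun m : move => m.1 \in free_pos d rho) r.
  by rewrite all_map; apply/allP => m hm /=; rewrite mem_nth_free // (allP p_lt).
have r_copies : all (fun m : move => m.2 < k.-1) r.
  by rewrite all_map; apply/allP => m /(allP p_moves)/andP[].
have r_sorted : sorted (fun a b : move => a.1 != b.1) r.
  rewrite /r /relab sorted_map; apply: (sub_in_sorted _ p_lt p_sorted).
  by move=> a b ha hb /=; rewrite eq_nth_free.
have t_lt y : y \in t -> y.1 < size (free_pos d rho).
  by move=> /t_sub/facet_vertsP[_]; rewrite size_free_pos_cell ltnS.
have lift_vertE y : y \in t ->
    lift_vert d rho y = vert (top_hist rho ++ r) (nth_free d rho y.1).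
  by move=> hy; rewrite {1}(facet_vertsP (t_sub y hy)).1 lift_vert_vert ?t_lt.
have lift_vertK : {in t, cancel (lift_vert d rho) (reduce_vert d rho)}.
  move=> y hy; rewrite lift_vertE // reduce_vert_vert ?mem_nth_free ?t_lt //.
  by rewrite nth_freeK ?t_lt // relab_nth_freeK // -(facet_vertsP (t_sub y hy)).1.
have lift_free y : y \in t -> nth_free d rho y.1 \in free_pos d rho.
  by move=> hy; rewrite mem_nth_free ?t_lt.
have lift_disj x : x \in map (lift_vert d rho) t -> x \notin rho.
  move=> /mapP[y hy ->]; apply/negP => hin.
  have := lift_free y hy; rewrite lift_vertE // in hin.
  by rewrite mem_free_pos (map_f fst hin) andbF.
split=> //; split=> //; split.
  rewrite cat_uniq rho_uniq andbT map_inj_in_uniq; last exact: can_in_inj lift_vertK.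
  by rewrite t_uniq -all_predC; apply/allP => z hz /=; apply/negP => /lift_disj; rewrite hz.
exists (top_hist rho ++ r); split.
  exact: top_hist_cat_valid p0_valid rho_sub r_free r_copies r_sorted.
move=> z; rewrite mem_cat => /orP[/mapP[y hy ->]|].
  have := lift_free y hy; rewrite lift_vertE // mem_free_pos => /andP[hle _].
  exact: mem_facet_verts.
exact: (top_hist_cat_sub rho_sub r_free).
Qed.

End Link.

Theorem proposition5 (d k : nat) (hd : 1 <= d) (hk : 1 <= k)
  (rho : seq vertex) (hrho : T d k rho) (hsz : size rho <= d.-1) :
  sc_iso (link (T d k) rho) (T (d - size rho) k).
Proof.
have rho_small : size rho <= d by lia.
exists (reduce_vert d rho), (lift_vert d rho); split.
- by move=> x /(reduce_link_cell hrho rho_small)[? /(_ x (mem_head _ _))].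
- by move=> y /(lift_T_cell hrho rho_small)[? /(_ y (mem_head _ _))].
- by move=> s /(reduce_link_cell hrho rho_small)[].
- by move=> t /(lift_T_cell hrho rho_small)[].
Qed.
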